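(* For every discrete distribution $\mu$, $S[\mu]^2\le \frac13 M_2[\mu]\,M_0[\mu]^3$.
   Context: A discrete distribution is a finite set $\mu=\{(x_1,m_1),\dots,(x_k,m_k)\}$ with $x_i\in\mathbb R$ distinct and $m_i>0$. Its moments are $M_j[\mu]=\sum_i m_ix_i^j$. Its spread is $S[\mu]=\sum_{i<j}|x_i-x_j|\,m_im_j$. *)

(* A discrete distribution with k atoms is encoded by
   positions x : 'I_k -> R (pairwise distinct) and masses m : 'I_k -> R (> 0),
   over an arbitrary real field R. *)
From HB Require Import structures.
From mathcomp Require Import all_boot all_order all_algebra.
Set Implicit Arguments. Unset Strict Implicit. Unset Printing Implicit Defensive.
Import Order.TTheory GRing.Theory Num.Theory.
Local Open Scope ring_scope.

Definition moment (R : realFieldType) (k : nat) (x m : 'I_k -> R) (j : nat) : R :=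
  \sum_(i < k) m i * x i ^+ j.

Definition spread (R : realFieldType) (k : nat) (x m : 'I_k -> R) : R :=
  \sum_(i < k) \sum_(j < k | (i < j)%N) `|x i - x j| * m i * m j.

From HB Require Import structures.
From mathcomp Require Import all_boot all_order all_algebra.
From mathcomp Require Import ring lra.
Set Implicit Arguments. Unset Strict Implicit. Unset Printing Implicit Defensive.
Import Order.TTheory GRing.Theory Num.Theory.
Local Open Scope ring_scope.

(* For atoms x_i with masses m_i put
     c_i = sum_j m_j sg(x_i - x_j)     (mass below x_i minus mass above x_i).
   Symmetrizing the double sum shows S = sum_i m_i x_i c_i, so the weighted
   Cauchy-Schwarz inequality gives S^2 <= M_2 * sum_i m_i c_i^2.  Expanding
   c_i^2, the quantity L = sum_i m_i c_i^2 is a triple sum over (i, j, l) of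
   m_i m_j m_l sg(x_i - x_j) sg(x_i - x_l); averaging it over the three cyclic
   relabellings of (i, j, l) and using that for any three reals the sum of the
   three products sg(a-b) sg(a-c) + sg(b-a) sg(b-c) + sg(c-a) sg(c-b) is at
   most 1, we get 3 L <= (sum_i m_i)^3 = M_0^3.  Combining the two bounds
   yields S^2 <= M_2 M_0^3 / 3. *)

(* For three reals, sg(a-b) sg(a-c) is 1 when a is a strict extreme of the
   triple, -1 when a lies strictly between the other two, and 0 on ties; the
   three such products therefore sum to at most 1. *)
Lemma sgr_triple_le1 (R : realDomainType) (a b c : R) :
  Num.sg (a - b) * Num.sg (a - c) + Num.sg (b - a) * Num.sg (b - c)
    + Num.sg (c - a) * Num.sg (c - b) <= 1.
Proof.
rewrite -(opprB a b) -(opprB a c) -(opprB b c) !sgrN !sgrEz.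
rewrite -!rmorphN -!rmorphM -!rmorphD -[1 : R]/((1 : int)%:~R) ler_int.
by case: sgzP; case: sgzP; case: sgzP.
Qed.

Lemma sgr_triple_weighted (R : realDomainType) (p q r a b c : R) :
  0 <= p -> 0 <= q -> 0 <= r ->
  p * q * r * (Num.sg (a - b) * Num.sg (a - c))
    + q * r * p * (Num.sg (b - c) * Num.sg (b - a))
    + r * p * q * (Num.sg (c - a) * Num.sg (c - b)) <= p * q * r.
Proof.
move=> p_ge0 q_ge0 r_ge0.
have pqr_ge0 : 0 <= p * q * r by rewrite !mulr_ge0.
have := ler_wpM2l pqr_ge0 (sgr_triple_le1 a b c).
by rewrite mulr1; apply: le_trans; rewrite le_eqVlt; apply/orP; left; apply/eqP; ring.
Qed.

Lemma sum_offdiag_pairs (V : nmodType) (k : nat) (g : 'I_k -> 'I_k -> V) :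
  (forall i, g i i = 0) ->
  \sum_(i < k) \sum_(j < k) g i j
    = \sum_(i < k) \sum_(j < k | (i < j)%N) (g i j + g j i).
Proof.
move=> g_diag0.
have swap : \sum_(i < k) \sum_(j < k | (i < j)%N) g j i
          = \sum_(i < k) \sum_(j < k | (j < i)%N) g i j.
  by rewrite (exchange_big_dep predT).
under [RHS]eq_bigr do rewrite big_split /=.
rewrite [RHS]big_split /= swap -big_split /=; apply: eq_bigr => i _.
rewrite [in RHS]big_mkcond [X in _ + X]big_mkcond -big_split /=.
apply: eq_bigr => j _.
case: ltngtP => [_|_|eq_ij]; rewrite ?addr0 ?add0r //.
by rewrite (val_inj eq_ij) g_diag0.
Qed.

Lemma sum_mul_sum (R : comPzRingType) (k : nat) (u v : 'I_k -> R) :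
  (\sum_i u i) * (\sum_j v j) = \sum_i \sum_j u i * v j.
Proof. by rewrite mulr_suml; apply: eq_bigr => i _; rewrite mulr_sumr. Qed.

(* Weighted Cauchy-Schwarz inequality, from the Lagrange identity
   sum_(i,j) w_i w_j (a_i b_j - a_j b_i)^2 = 2 (A B - C^2). *)
Lemma weighted_cauchy_schwarz (R : realDomainType) (k : nat) (w a b : 'I_k -> R) :
  (forall i, 0 <= w i) ->
  (\sum_i w i * a i * b i) ^+ 2
    <= (\sum_i w i * a i ^+ 2) * (\sum_i w i * b i ^+ 2).
Proof.
move=> w_ge0.
set A := \sum_i _ * a i ^+ 2; set B := \sum_i _ * b i ^+ 2; set C := \sum_i _.
have lagrange : \sum_i \sum_j w i * w j * (a i * b j - a j * b i) ^+ 2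
              = (A * B - C ^+ 2) *+ 2.
  have expand i j : w i * w j * (a i * b j - a j * b i) ^+ 2
      = (w i * a i ^+ 2) * (w j * b j ^+ 2) + (w j * a j ^+ 2) * (w i * b i ^+ 2)
        - (w i * a i * b i) * (w j * a j * b j) *+ 2 by ring.
  under eq_bigr do under eq_bigr do rewrite expand.
  under eq_bigr do rewrite sumrB big_split /= sumrMnl.
  rewrite sumrB big_split /= sumrMnl -sum_mul_sum exchange_big -!sum_mul_sum.
  by rewrite -/A -/B -/C; ring.
have : 0 <= \sum_i \sum_j w i * w j * (a i * b j - a j * b i) ^+ 2.
  by do 2![apply: sumr_ge0 => ? _]; rewrite mulr_ge0 ?sqr_ge0 ?mulr_ge0.
by rewrite lagrange pmulrn_lge0 // subr_ge0.
Qed.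

Lemma triple_sum_cycle (V : nmodType) (k : nat) (F : 'I_k -> 'I_k -> 'I_k -> V) :
  \sum_i \sum_j \sum_l F i j l = \sum_i \sum_j \sum_l F j l i.
Proof.
rewrite [RHS]exchange_big /=; apply: eq_bigr => j _.
by rewrite exchange_big.
Qed.

Section SignedMass.

Variables (R : realFieldType) (k : nat) (x m : 'I_k -> R).

Definition signed_mass (i : 'I_k) : R := \sum_j m j * Num.sg (x i - x j).

Lemma spread_signed_mass : spread x m = \sum_i m i * x i * signed_mass i.
Proof.
have -> : \sum_i m i * x i * signed_mass i
        = \sum_i \sum_j m i * x i * (m j * Num.sg (x i - x j)).
  by apply: eq_bigr => i _; rewrite mulr_sumr.
rewrite sum_offdiag_pairs => [|i]; last by rewrite subrr sgr0 !mulr0.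
apply: eq_bigr => i _; apply: eq_bigr => j _.
by rewrite -(opprB (x i)) sgrN normrEsg; ring.
Qed.

Lemma signed_mass_sq_le (hm : forall i, 0 <= m i) :
  3 * \sum_i m i * signed_mass i ^+ 2 <= moment x m 0 ^+ 3.
Proof.
pose T i j l := m i * m j * m l * (Num.sg (x i - x j) * Num.sg (x i - x l)).
have as_triple : \sum_i m i * signed_mass i ^+ 2 = \sum_i \sum_j \sum_l T i j l.
  apply: eq_bigr => i _; rewrite expr2 sum_mul_sum mulr_sumr.
  apply: eq_bigr => j _; rewrite mulr_sumr.
  by apply: eq_bigr => l _; rewrite /T; ring.
have mass_cube : moment x m 0 ^+ 3 = \sum_i \sum_j \sum_l m i * m j * m l.
  rewrite /moment (eq_bigr m) => [|i _]; last by rewrite mulr1.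
  rewrite exprS expr2 sum_mul_sum mulr_suml; apply: eq_bigr => i _.
  rewrite mulr_sumr; apply: eq_bigr => j _.
  by rewrite mulr_sumr; apply: eq_bigr => l _; rewrite mulrA.
have three_copies : 3 * \sum_i m i * signed_mass i ^+ 2
    = \sum_i \sum_j \sum_l T i j l + \sum_i \sum_j \sum_l T j l i
      + \sum_i \sum_j \sum_l T l i j.
  have cycle1 := triple_sum_cycle T.
  have cycle2 := triple_sum_cycle (fun i j l => T j l i); rewrite /= in cycle2.
  by rewrite -cycle2 -cycle1 -as_triple; ring.
rewrite three_copies mass_cube -!big_split; apply: ler_sum => i _.
rewrite -!big_split; apply: ler_sum => j _.
rewrite -!big_split; apply: ler_sum => l _.
exact: sgr_triple_weighted.
Qed.

End SignedMass.

Theorem mainTheorem5 (R : realFieldType) (k : nat) (x m : 'I_k -> R)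
  (hx : injective x) (hm : forall i, 0 < m i) :
  spread x m ^+ 2 <= 3^-1 * moment x m 2 * moment x m 0 ^+ 3.
Proof.
have m_ge0 i : 0 <= m i by exact: ltW.
have M2_ge0 : 0 <= moment x m 2.
  by apply: sumr_ge0 => i _; rewrite mulr_ge0 ?sqr_ge0.
have spread_sq_le := weighted_cauchy_schwarz x (signed_mass x m) m_ge0.
rewrite -spread_signed_mass in spread_sq_le.
have L_le : \sum_i m i * signed_mass x m i ^+ 2 <= 3^-1 * moment x m 0 ^+ 3.
  by have := signed_mass_sq_le x m_ge0; lra.
apply: (le_trans spread_sq_le); rewrite -mulrA mulrCA.
exact: ler_wpM2l.
Qed.
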